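(* Let $k \in \mathbb{N}$, let $G_1, \ldots, G_k$ be ordered graphs, and let $G = G_1 + \ldots + G_k$. Suppose that for each $i \in [k]$ there is an integer $m(i)$ such that $G_i$ has at least two distinct irreducible induced ordered subgraphs on $m(i)$ vertices. Then $S_n(G) \geqslant 2^{n-1}$ for each $n \leqslant k$.
   Context: Ordered graphs of order $n$ have vertex set $[n]$ with the natural order; distinct means non-isomorphic as ordered graphs. A pair of vertices $u<v$ separates the edges of $G$ if every edge $ij$ ($i<j$) has $j\leqslant u$ or $v\leqslant i$; $G$ is irreducible if no pair separates its edges. For ordered graphs $G_1,\dots,G_k$, $G_1+\dots+G_k$ is the ordered graph obtained by placing copies of $G_1,\dots,G_k$ consecutively from left to right with no edges between different copies. $S_n(G)$ is the number of distinct induced ordered subgraphs of $G$ of order $n$. *)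

From mathcomp Require Import all_boot.
Set Implicit Arguments. Unset Strict Implicit. Unset Printing Implicit Defensive.

(* An ordered graph of order n: vertex set 'I_n = {0,..,n-1} (0-indexed copy of
   [n] with its natural order), edges stored as pairs (i,j) with i < j.
   Since the only order-preserving bijection of 'I_n is the identity, two
   ordered graphs of order n are isomorphic iff they are equal, so
   "distinct" = different edge sets. *)
Definition ograph (n : nat) := {set 'I_n * 'I_n}.

Definition wf_ograph n (G : ograph n) : bool :=
  [forall p in G, (p.1 < p.2)%N].

Definition separates n (G : ograph n) (u v : 'I_n) : bool :=
  [forall p in G, (p.2 <= u)%N || (v <= p.1)%N].

Definition irreducible n (G : ograph n) : bool :=
  ~~ [exists u : 'I_n, exists v : 'I_n, (u < v)%N && separates G u v].

Definition incr_map m n (f : {ffun 'I_m -> 'I_n}) : bool :=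
  [forall i : 'I_m, forall j : 'I_m, (i < j)%N ==> (f i < f j)%N].

Definition induced m n (G : ograph n) (f : {ffun 'I_m -> 'I_n}) : ograph m :=
  [set p : 'I_m * 'I_m | (f p.1, f p.2) \in G].

Definition induced_subgraphs n (G : ograph n) (m : nat) : {set ograph m} :=
  [set induced G f | f in [pred f : {ffun 'I_m -> 'I_n} | incr_map f]].

Definition S m n (G : ograph n) : nat := #|induced_subgraphs G m|.

(* G_1 + ... + G_k: the graph of order \sum_i ns i, the copy of G_i placed on
   the vertices offset i, ..., offset i + ns i - 1. *)
Definition offset k (ns : 'I_k -> nat) (i : 'I_k) : nat :=
  \sum_(j < k | (j < i)%N) ns j.

Definition gsum k (ns : 'I_k -> nat) (Gs : forall i : 'I_k, ograph (ns i))
  : ograph (\sum_(i < k) ns i) :=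
  [set p | [exists i : 'I_k, exists x : 'I_(ns i), exists y : 'I_(ns i),
      [&& (x, y) \in Gs i,
          val p.1 == offset ns i + x &
          val p.2 == offset ns i + y]]].

From mathcomp Require Import all_boot zify.
From mathcomp Require Import boolp.
Set Implicit Arguments. Unset Strict Implicit. Unset Printing Implicit Defensive.

(* Read an induced ordered subgraph of G_t + ... + G_k on r vertices from the left: it
   is an irreducible induced subgraph of G_t on its first l vertices, glued to an
   induced subgraph of G_(t+1) + ... + G_k on the other r - l vertices, and the glued
   graph determines l as the length of its leftmost irreducible block.  One of the first
   two vertices of an irreducible ordered graph can always be deleted keeping it
   irreducible, so G_t has irreducible induced subgraphs of every order l <= m(t), and
   two of order m(t).
   By induction this gives
     S_r(G_t + ... + G_k) >= sum_(1 <= l <= r) w(l) 2^(max(r - l - 1, 0)),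
   with w(l) = [l <= m(t)] + [l = m(t)], and the right-hand side is at least 2^(r-1). *)

Lemma card_bigcup_disjoint (I T : finType) (F : I -> {set T}) :
  (forall i j, i != j -> [disjoint F i & F j]) ->
  #|\bigcup_i F i| = \sum_i #|F i|.
Proof.
move=> disjF; rewrite -sum1_card (partition_disjoint_bigcup _ (fun=> 1) disjF).
by apply: eq_bigr => i _; rewrite sum1_card.
Qed.

Lemma block_unique (b : nat -> nat) t u x : {homo b : p q / p <= q} ->
  b t <= x < b t.+1 -> b u <= x < b u.+1 -> t = u.
Proof.
move=> b_homo /andP[tx xt] /andP[ux xu].
case: (ltngtP t u) => // [tu|ut]; [have := b_homo _ _ tu | have := b_homo _ _ ut]; lia.
Qed.

Section Glue.
Variable n : nat.
Implicit Types (A Q : ograph n) (i j l : nat).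

Definition adj A i j : bool :=
  [exists p in A, (p.1 == i :> nat) && (p.2 == j :> nat)].

Lemma adjE A (p : 'I_n * 'I_n) : adj A p.1 p.2 = (p \in A).
Proof.
apply/existsP/idP => [[q /and3P[qA /eqP e1 /eqP e2]]|pA]; last by exists p; rewrite pA !eqxx.
by case: p q qA e1 e2 => [a c] [a' c'] /= qA /val_inj <- /val_inj <-.
Qed.

Lemma adj_lt A i j : adj A i j -> (i < n) && (j < n).
Proof. by case/existsP => -[a c] /and3P[_ /eqP <- /eqP <-]; rewrite !ltn_ord. Qed.

Lemma adj_inj A Q : adj A =2 adj Q -> A = Q.
Proof. by move=> eAQ; apply/setP => p; rewrite -!adjE eAQ. Qed.

Lemma adj_set (R : rel nat) i j :
  adj [set p : 'I_n * 'I_n | R p.1 p.2] i j = [&& i < n, j < n & R i j].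
Proof.
apply/idP/idP => [ijR|/and3P[i_lt j_lt ijR]].
  by have /andP[i_lt j_lt] := adj_lt ijR; move: ijR; rewrite i_lt j_lt /=;
     case/existsP => p /and3P[]; rewrite inE => pR /eqP <- /eqP <-.
by apply/existsP; exists (Ordinal i_lt, Ordinal j_lt); rewrite inE /= ijR !eqxx.
Qed.

Lemma adjU A Q i j : adj (A :|: Q) i j = adj A i j || adj Q i j.
Proof.
apply/existsP/orP => [[p /and3P[]]|[|] /existsP[p /andP[pA ijp]]].
  by rewrite inE => /orP[] pA *; [left | right]; apply/existsP; exists p; apply/and3P.
all: by exists p; rewrite inE pA ?orbT.
Qed.

Definition supported l A := forall i j, adj A i j -> (i < l) && (j < l).

Definition irreducible_on l A :=
  forall g, g.+1 < l -> exists i j, [/\ i <= g, g < j & adj A i j].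

Definition shift l Q : ograph n :=
  [set p : 'I_n * 'I_n | [&& l <= p.1, l <= p.2 & adj Q (p.1 - l) (p.2 - l)]].

Definition glue l A Q : ograph n := A :|: shift l Q.

Lemma adj_glue l A Q i j : adj (glue l A Q) i j =
  adj A i j || [&& i < n, j < n, l <= i, l <= j & adj Q (i - l) (j - l)].
Proof. by rewrite adjU (adj_set (fun i j => [&& l <= i, l <= j & adj Q (i - l) (j - l)])). Qed.

Lemma adj_glue_cross l A Q i j : supported l A -> i < l <= j ->
  adj (glue l A Q) i j = false.
Proof.
move=> suppA /andP[il lj]; rewrite adj_glue.
by case: (boolP (adj A i j)) => [/suppA|_]; lia.
Qed.

Lemma glue_inj l A1 A2 Q1 Q2 :
  supported l A1 -> supported l A2 -> supported (n - l) Q1 -> supported (n - l) Q2 ->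
  glue l A1 Q1 = glue l A2 Q2 -> A1 = A2 /\ Q1 = Q2.
Proof.
move=> suppA1 suppA2 suppQ1 suppQ2 eq_glue.
have low A Q i j : supported l A -> adj A i j = [&& i < l, j < l & adj (glue l A Q) i j].
  move=> suppA; rewrite adj_glue; case: (boolP (adj A i j)) => [/suppA|]; first lia.
  by case: (ltnP i l) => //=; case: (ltnP j l); rewrite ?andbF.
have high A Q i j : supported l A -> supported (n - l) Q ->
    adj Q i j = adj (glue l A Q) (l + i) (l + j).
  move=> suppA suppQ; rewrite adj_glue !addKn !leq_addr.
  case: (boolP (adj A (l + i) (l + j))) => [/suppA|_]; first lia.
  by case: (boolP (adj Q i j)) => [/suppQ|]; rewrite ?andbF //; lia.
split; apply: adj_inj => i j.
- by rewrite (low A1 Q1) // (low A2 Q2) // eq_glue.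
- by rewrite (high A1 Q1) // (high A2 Q2) // eq_glue.
Qed.

Lemma glue_inj_size l1 l2 A1 A2 Q1 Q2 : 0 < l1 -> 0 < l2 ->
  irreducible_on l1 A1 -> irreducible_on l2 A2 -> supported l1 A1 -> supported l2 A2 ->
  glue l1 A1 Q1 = glue l2 A2 Q2 -> l1 = l2.
Proof.
have lt_glue l l' A A' Q Q' : 0 < l -> l < l' -> irreducible_on l' A' -> supported l A ->
    glue l A Q <> glue l' A' Q'.
  move=> l_gt0 ll' irrA' suppA eq_glue.
  have [|i [j [il lj ijA']]] := irrA' l.-1; first lia.
  have /(adj_glue_cross Q suppA) : i < l <= j by lia.
  by rewrite eq_glue adjU ijA'.
move=> l1_gt0 l2_gt0 irr1 irr2 supp1 supp2 eq_glue.
case: (ltngtP l1 l2) => // [lt12|lt21]; exfalso.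
- exact: lt_glue l1_gt0 lt12 irr2 supp1 eq_glue.
- exact: lt_glue l2_gt0 lt21 irr1 supp2 (esym eq_glue).
Qed.

End Glue.

Section IrreducibleSeq.
Variable E : rel nat.

Definition irreducible_seq (s : seq nat) := forall g, g.+1 < size s ->
  exists i j, [/\ i <= g, g < j, j < size s & E (nth 0 s i) (nth 0 s j)].

Lemma irreducible_seq_drop x y z : irreducible_seq [:: x, y & z] ->
  irreducible_seq (y :: z) \/ irreducible_seq (x :: z).
Proof.
move=> irr; have [|/existsNP[g0 /not_implyP[g0_lt uncut]]] := EM (irreducible_seq (y :: z)).
  by left.
right.
(* Gap g0 of y :: z is crossed only by an edge from x, which also crosses every earlier
   gap of x :: z; a later gap cannot rely on an edge from y, which would cross g0. *)
have [i0 [j0 [i0_le g0_lt_j0 j0_lt e0]]] := irr g0.+1 g0_lt.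
have {i0 i0_le} e0 : E x (nth 0 z j0.-2).
  case: i0 i0_le e0 => [|i0] i0_le e0; first by case: j0 g0_lt_j0 j0_lt e0 => [|[|j]].
  by case: uncut; exists i0, j0.-1; case: j0 g0_lt_j0 j0_lt e0 => // j; split.
move=> g g_lt /=; case: (leqP g g0) => [g_le|g0_lt_g].
  by exists 0, j0.-1; case: j0 g0_lt_j0 j0_lt e0 => [|[|j]] //=; split; lia.
have [[|[|i]] [j [i_le g_lt_j j_lt e]]] := irr g.+1 g_lt.
- by exists 0, j.-1; case: j g_lt_j j_lt e => [|[|j]] //=; split; lia.
- by case: uncut; exists 0, j.-1; case: j g_lt_j j_lt e => [|j] //=; split; lia.
- by exists i.+1, j.-1; case: j g_lt_j j_lt e => [|[|j]] //=; split; lia.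
Qed.

Lemma irreducible_subseq s l : irreducible_seq s -> 0 < l <= size s ->
  exists2 s', subseq s' s & size s' = l /\ irreducible_seq s'.
Proof.
move=> irr /andP[l_gt0 /subnKC]; move: (size s - l) => d /esym size_s.
elim: d s irr size_s => [|d IH] s irr size_s; first by exists s; rewrite // size_s addn0.
case: s irr size_s => [|x [|y z]] irr size_s; rewrite /= in size_s; try lia.
have [yz|xz] := irreducible_seq_drop irr.
- have [|s' sub_s' ?] := IH (y :: z) yz; first by rewrite /=; lia.
  by exists s' => //; apply: (subseq_trans sub_s'); exact: subseq_cons.
- have [|s' sub_s' ?] := IH (x :: z) xz; first by rewrite /=; lia.
  exists s' => //; apply: (subseq_trans sub_s'); rewrite /= eqxx; exact: subseq_cons.
Qed.

Lemma irreducible_seq_induced m (H : ograph m) s : size s = m ->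
  (forall a c : 'I_m, E (nth 0 s a) (nth 0 s c) = ((a, c) \in H)) ->
  irreducible H -> irreducible_seq s.
Proof.
move=> size_s eH irrH g; rewrite size_s => g_lt.
have : ~~ separates H (Ordinal (ltnW g_lt)) (Ordinal g_lt).
  by apply: contra irrH => sep; apply/existsP; exists (Ordinal (ltnW g_lt));
     apply/existsP; exists (Ordinal g_lt); rewrite /= ltnSn.
rewrite negb_forall => /existsP[[a c]]; rewrite negb_imply negb_or -!ltnNge /=.
by case/and3P => ac_in g_lt_c a_le; exists a, c; rewrite eH.
Qed.

End IrreducibleSeq.

Definition sample lo hi r (s : seq nat) : bool :=
  [&& sorted ltn s, size s == r & all (fun x => lo <= x < hi) s].

Lemma sample_subseq lo hi r s s' :
  subseq s' s -> sample lo hi r s -> sample lo hi (size s') s'.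
Proof.
move=> sub /and3P[sorted_s _ /allP in_s].
rewrite /sample eqxx (subseq_sorted ltn_trans sub) //.
by apply/allP => x /(mem_subseq sub)/in_s.
Qed.

Lemma sample_cat lo mid hi l r s s' : lo <= mid <= hi ->
  sample lo mid l s -> sample mid hi r s' -> sample lo hi (l + r) (s ++ s').
Proof.
move=> /andP[lo_mid mid_hi] /and3P[sorted_s /eqP <- /allP in_s].
move=> /and3P[sorted_s' /eqP <- /allP in_s'].
have sorted_cat : sorted ltn (s ++ s').
  rewrite sorted_pairwise ?pairwise_cat -?sorted_pairwise ?sorted_s ?sorted_s' ?andbT;
    try exact: ltn_trans.
  by apply/allrelP => x y /in_s /andP[_ x_lt] /in_s' /andP[y_ge _]; lia.
rewrite /sample size_cat eqxx sorted_cat all_cat /=.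
by apply/andP; split; apply/allP => x; [move/in_s | move/in_s']; lia.
Qed.

Definition weight m l := (l <= m) + (l == m).

Lemma pow2_le_weighted_sum m r : 0 < m ->
  2 ^ r <= \sum_(l < r.+1) weight m l.+1 * 2 ^ (r - l.+1).
Proof.
move=> m_gt0; pose T r := \sum_(l < r) weight m l.+1 * 2 ^ (r - l.+1).
have T_rec j : T j.+1 = 2 * T j + weight m j.+1.
  rewrite /T big_ord_recr /= subnn muln1 big_distrr; congr (_ + _).
  apply: eq_bigr => l _; rewrite /= mulnCA -expnS; congr (_ * 2 ^ _).
  by have := ltn_ord l; lia.
have T_low j : 2 ^ j <= T j + (j < m).
  elim: j => [|j IH]; first by rewrite /T big_ord0 m_gt0.
  by move: IH; rewrite T_rec expnS /weight; case: (ltngtP j.+1 m); lia.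
rewrite big_ord_recr /= subnS subnn muln1 -/(T r).
by move: (T_low r); rewrite /weight; case: (ltngtP r.+1 m); lia.
Qed.

Section Patterns.
Variables (n : nat) (E : rel nat).

(* Graphs of order r <= n are encoded as graphs on 'I_n whose vertices >= r are
   isolated, so that they all live in the finite type [ograph n]. *)
Definition pattern (s : seq nat) : ograph n :=
  [set p : 'I_n * 'I_n | [&& p.1 < size s, p.2 < size s & E (nth 0 s p.1) (nth 0 s p.2)]].

Lemma adj_pattern s i j : adj (pattern s) i j =
  [&& i < n, j < n, i < size s, j < size s & E (nth 0 s i) (nth 0 s j)].
Proof.
by rewrite /pattern
  (@adj_set n (fun i j => [&& i < size s, j < size s & E (nth 0 s i) (nth 0 s j)])).
Qed.

Lemma supported_pattern s l : size s <= l -> supported l (pattern s).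
Proof. by move=> size_s i j; rewrite adj_pattern => /and5P[_ _ i_lt j_lt _]; lia. Qed.

Lemma irreducible_on_pattern s : size s <= n -> irreducible_seq E s ->
  irreducible_on (size s) (pattern s).
Proof.
move=> size_s irr g g_lt; have [i [j [i_le g_lt_j j_lt e]]] := irr g g_lt.
by exists i, j; split => //; rewrite adj_pattern e; apply/and5P; split => //; lia.
Qed.

Lemma pattern_neq s1 s2 i j : size s1 = size s2 -> size s1 <= n ->
  i < size s1 -> j < size s1 ->
  E (nth 0 s1 i) (nth 0 s1 j) != E (nth 0 s2 i) (nth 0 s2 j) -> pattern s1 != pattern s2.
Proof.
move=> eq_size size_le i_lt j_lt; apply: contra => /eqP eq_pat.
have := congr1 (fun A => adj A i j) eq_pat; rewrite /= !adj_pattern -eq_size i_lt j_lt.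
by rewrite (leq_trans i_lt size_le) (leq_trans j_lt size_le) => /= ->.
Qed.

Lemma pattern_cat s s' : {in s & s', forall x y, ~~ E x y && ~~ E y x} ->
  pattern (s ++ s') = glue (size s) (pattern s) (pattern s').
Proof.
move=> no_cross; apply: adj_inj => i j; rewrite adj_glue !adj_pattern size_cat !nth_cat.
have cross x y : x < size s -> size s <= y -> y < size s + size s' ->
    ~~ E (nth 0 s x) (nth 0 s' (y - size s)) && ~~ E (nth 0 s' (y - size s)) (nth 0 s x).
  by move=> x_lt y_ge y_lt; apply: no_cross; apply: mem_nth; lia.
case: (ltnP i (size s)) => i_lt; case: (ltnP j (size s)) => j_lt.
- by rewrite (ltn_addr _ i_lt) (ltn_addr _ j_lt) !andbF orbF.
- case: (ltnP j (size s + size s')) => j_lt'; last by rewrite !andbF.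
  by have /andP[/negbTE -> _] := cross i j i_lt j_lt j_lt'; rewrite !andbF.
- case: (ltnP i (size s + size s')) => i_lt'; last by rewrite !andbF.
  by have /andP[_ /negbTE ->] := cross j i j_lt i_lt i_lt'; rewrite !andbF.
- have -> : (i - size s < size s') = (i < size s + size s') by lia.
  have -> : (j - size s < size s') = (j < size s + size s') by lia.
  case: (ltnP i n) => i_n; case: (ltnP j n) => j_n //=.
  by rewrite (leq_ltn_trans (leq_subr _ _) i_n) (leq_ltn_trans (leq_subr _ _) j_n).
Qed.

Definition patterns (P : seq nat -> Prop) : {set ograph n} :=
  [set A | `[< exists2 s, P s & A = pattern s >]].

Lemma patternsP P A : reflect (exists2 s, P s & A = pattern s) (A \in patterns P).
Proof. by rewrite inE; exact: asboolP. Qed.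

Lemma pattern_in_patterns (P : seq nat -> Prop) s : P s -> pattern s \in patterns P.
Proof. by move=> Ps; apply/patternsP; exists s. Qed.

Definition sample_patterns lo hi r := patterns (fun s => sample lo hi r s).

Definition irr_patterns lo hi l :=
  patterns (fun s => sample lo hi l s /\ irreducible_seq E s).

Lemma sample_patterns_supported lo hi r l A : r <= l ->
  A \in sample_patterns lo hi r -> supported l A.
Proof.
by move=> r_le /patternsP[s /and3P[_ /eqP size_s _] ->]; apply: supported_pattern; rewrite size_s.
Qed.

Lemma irr_patterns_irreducible lo hi l A : l <= n ->
  A \in irr_patterns lo hi l -> supported l A /\ irreducible_on l A.
Proof.
move=> l_le /patternsP[s [/and3P[_ /eqP size_s _] irr] ->]; rewrite -size_s in l_le *.
by split; [exact: supported_pattern | exact: irreducible_on_pattern].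
Qed.

Lemma irr_patterns_card lo hi m s1 s2 (i j : 'I_m) l :
  sample lo hi m s1 -> sample lo hi m s2 -> irreducible_seq E s1 -> irreducible_seq E s2 ->
  E (nth 0 s1 i) (nth 0 s1 j) != E (nth 0 s2 i) (nth 0 s2 j) ->
  0 < l <= n -> weight m l <= #|irr_patterns lo hi l|.
Proof.
move=> sample1 sample2 irr1 irr2 neq /andP[l_gt0 l_le].
have /and3P[_ /eqP size1 _] := sample1; have /and3P[_ /eqP size2 _] := sample2.
rewrite /weight; case: (ltngtP l m) => [l_lt|//|l_eq] /=.
  have [|s sub [size_s irr]] := irreducible_subseq irr1 (l := l).
    by rewrite l_gt0 size1 ltnW.
  apply/card_gt0P; exists (pattern s); apply: pattern_in_patterns; split => //.
  by rewrite -size_s; exact: sample_subseq sample1.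
have neq_pat : pattern s1 != pattern s2.
  by apply: pattern_neq neq; rewrite ?size1 ?size2 -?l_eq.
rewrite -l_eq in sample1 sample2.
have <- : #|[set pattern s1; pattern s2]| = 1 + 1 by rewrite cards2 neq_pat.
by apply/subset_leq_card/subsetP => A /set2P[] ->; apply: pattern_in_patterns.
Qed.

End Patterns.

Section TailPatterns.
Variables (n : nat) (E : rel nat) (b : nat -> nat) (k : nat).
Hypothesis b_homo : {homo b : t u / t <= u}.
Hypothesis E_local : forall x y, E x y ->
  exists t, b t <= x < b t.+1 /\ b t <= y < b t.+1.
Hypothesis two_irreducible : forall t, t < k -> exists m s1 s2 (i j : 'I_m),
  [/\ sample (b t) (b t.+1) m s1, sample (b t) (b t.+1) m s2,
      irreducible_seq E s1, irreducible_seq E s2 &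
      E (nth 0 s1 i) (nth 0 s1 j) != E (nth 0 s2 i) (nth 0 s2 j)].

Lemma no_cross_edge t x y : b t <= x < b t.+1 -> b t.+1 <= y -> ~~ E x y && ~~ E y x.
Proof.
move=> x_in y_ge; apply/andP; split; apply/negP => /E_local[u [x_u y_u]].
- by have eq_tu := block_unique b_homo x_in x_u; subst u; lia.
- by have eq_tu := block_unique b_homo x_in y_u; subst u; lia.
Qed.

Lemma tail_patterns_rec t r : t < k -> r <= n ->
  \sum_(l < r) #|irr_patterns n E (b t) (b t.+1) l.+1| *
               #|sample_patterns n E (b t.+1) (b k) (r - l.+1)|
  <= #|sample_patterns n E (b t) (b k) r|.
Proof.
move=> t_lt r_le.
pose glued l := [set glue l AQ.1 AQ.2 | AQ in setX (irr_patterns n E (b t) (b t.+1) l)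
                                        (sample_patterns n E (b t.+1) (b k) (r - l))].
have glued_card l : 0 < l <= r -> #|glued l| =
    #|irr_patterns n E (b t) (b t.+1) l| * #|sample_patterns n E (b t.+1) (b k) (r - l)|.
  move=> /andP[l_gt0 l_le]; rewrite card_in_imset ?cardsX //.
  move=> [A1 Q1] [A2 Q2] /setXP[/= A1_in Q1_in] /setXP[/= A2_in Q2_in] /= eq_glue.
  have [suppA1 _] := irr_patterns_irreducible (leq_trans l_le r_le) A1_in.
  have [suppA2 _] := irr_patterns_irreducible (leq_trans l_le r_le) A2_in.
  have suppQ1 := sample_patterns_supported (leq_sub2r l r_le) Q1_in.
  have suppQ2 := sample_patterns_supported (leq_sub2r l r_le) Q2_in.
  by have [-> ->] := glue_inj suppA1 suppA2 suppQ1 suppQ2 eq_glue.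
have glued_sub l : l <= r -> glued l \subset sample_patterns n E (b t) (b k) r.
  move=> l_le; apply/subsetP => _ /imsetP[[A Q] /setXP[/= A_in Q_in] ->] /=.
  case/patternsP: A_in => s [sample_s _] ->; case/patternsP: Q_in => s' sample_s' ->.
  have /and3P[_ /eqP size_s /allP s_in] := sample_s.
  have /and3P[_ _ /allP s'_in] := sample_s'.
  rewrite -size_s -pattern_cat => [|x y /s_in x_in /s'_in /andP[y_ge _]]; last first.
    exact: no_cross_edge x_in y_ge.
  apply: pattern_in_patterns; rewrite -(subnKC l_le); apply: sample_cat sample_s sample_s'.
  by rewrite b_homo //= b_homo.
have glued_disj (l1 l2 : 'I_r) : l1 != l2 -> [disjoint glued l1.+1 & glued l2.+1].
  rewrite -setI_eq0; apply: contraR => /set0Pn[P /setIP[]].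
  move=> /imsetP[[A1 Q1] /setXP[/= A1_in _] ->] /imsetP[[A2 Q2] /setXP[/= A2_in _] eq_glue].
  have [supp1 irr1] := irr_patterns_irreducible (leq_trans (ltn_ord l1) r_le) A1_in.
  have [supp2 irr2] := irr_patterns_irreducible (leq_trans (ltn_ord l2) r_le) A2_in.
  by apply/eqP/val_inj/succn_inj; apply: glue_inj_size irr1 irr2 supp1 supp2 eq_glue.
rewrite (eq_bigr (fun l : 'I_r => #|glued l.+1|)) => [|l _]; last first.
  by rewrite glued_card ?ltn_ord.
rewrite -card_bigcup_disjoint //; apply/subset_leq_card/bigcupsP => l _; exact: glued_sub.
Qed.

Lemma tail_patterns_card t r : r <= k - t -> r <= n ->
  2 ^ r.-1 <= #|sample_patterns n E (b t) (b k) r|.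
Proof.
elim/ltn_ind: r t => -[|r] IH t r_le r_n.
  by apply/card_gt0P; exists (pattern n E [::]); apply: pattern_in_patterns.
have t_lt : t < k by lia.
have [m [s1 [s2 [i [j [sample1 sample2 irr1 irr2 neq]]]]]] := two_irreducible t_lt.
have m_gt0 : 0 < m := leq_ltn_trans (leq0n i) (ltn_ord i).
apply: leq_trans (tail_patterns_rec t_lt r_n).
apply: leq_trans (pow2_le_weighted_sum r m_gt0) _; apply: leq_sum => l _; apply: leq_mul.
  apply: (irr_patterns_card sample1 sample2 irr1 irr2 neq).
  by rewrite /= (leq_trans (ltn_ord l) r_n).
by rewrite subSS subnS; apply: IH; lia.
Qed.

End TailPatterns.

Section BlockSum.
Variables (k : nat) (ns : 'I_k -> nat) (Gs : forall i : 'I_k, ograph (ns i)).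
Local Notation N := (\sum_(i < k) ns i).

Definition boundary t := \sum_(j < k | j < t) ns j.

Definition sum_edge (x y : nat) : bool :=
  [exists i, exists a : 'I_(ns i), exists c : 'I_(ns i),
    [&& (a, c) \in Gs i, x == boundary i + a & y == boundary i + c]].

Lemma boundary_homo : {homo boundary : t u / t <= u}.
Proof.
move=> t u tu; rewrite /boundary big_mkcond [X in _ <= X]big_mkcond /=.
by apply: leq_sum => j _; case: ifP; case: ifP => //; lia.
Qed.

Lemma boundary0 : boundary 0 = 0.
Proof. exact: big_pred0. Qed.

Lemma boundaryS (i : 'I_k) : boundary i.+1 = boundary i + ns i.
Proof.
rewrite /boundary (bigD1 i) //= addnC; congr (_ + _).
by apply: eq_bigl => j; rewrite ltnS ltn_neqAle andbC.
Qed.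

Lemma boundary_size : boundary k = N.
Proof. by apply: eq_bigl => j; rewrite ltn_ord. Qed.

Lemma sum_edge_local x y : sum_edge x y ->
  exists t, boundary t <= x < boundary t.+1 /\ boundary t <= y < boundary t.+1.
Proof.
case/existsP => i /existsP[a /existsP[c /and3P[_ /eqP -> /eqP ->]]].
by exists i; rewrite boundaryS; have := ltn_ord a; have := ltn_ord c; lia.
Qed.

Lemma sum_edge_block (i : 'I_k) (a c : 'I_(ns i)) :
  sum_edge (boundary i + a) (boundary i + c) = ((a, c) \in Gs i).
Proof.
apply/existsP/idP => [|ac]; last first.
  by exists i; apply/existsP; exists a; apply/existsP; exists c; rewrite ac !eqxx.
case=> i' /existsP[a' /existsP[c' /and3P[ac' /eqP ea /eqP ec]]].
have eq_i : i' = i.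
  apply/ord_inj/(block_unique boundary_homo (x := boundary i + a)); rewrite !boundaryS;
    by have := ltn_ord a; have := ltn_ord a'; lia.
subst i'; have -> : a = a' by apply: ord_inj; lia.
by have -> : c = c' by apply: ord_inj; lia.
Qed.

Lemma induced_sample (i : 'I_k) m H : H \in induced_subgraphs (Gs i) m ->
  exists2 s, sample (boundary i) (boundary i.+1) m s &
    forall a c : 'I_m, sum_edge (nth 0 s a) (nth 0 s c) = ((a, c) \in H).
Proof.
case/imsetP => f; rewrite inE => /forallP f_incr ->.
pose s := [seq boundary i + f a | a <- enum 'I_m].
have nth_s (a : 'I_m) : nth 0 s a = boundary i + f a.
  by rewrite (nth_map a) ?size_enum_ord // nth_ord_enum.
exists s => [|a c]; last by rewrite !nth_s sum_edge_block inE.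
rewrite /sample size_map size_enum_ord eqxx /=; apply/andP; split.
  apply/(sortedP 0) => j; rewrite size_map size_enum_ord => j_lt.
  rewrite /= (nth_s (Ordinal (ltnW j_lt))) (nth_s (Ordinal j_lt)) ltn_add2l.
  by have /forallP/(_ (Ordinal j_lt))/implyP := f_incr (Ordinal (ltnW j_lt)); apply.
by apply/allP => _ /mapP[a _ ->]; rewrite boundaryS leq_addr ltn_add2l ltn_ord.
Qed.

Lemma sample_patterns_induced n :
  sample_patterns n sum_edge 0 N n \subset induced_subgraphs (gsum Gs) n.
Proof.
apply/subsetP => _ /patternsP[s /and3P[sorted_s /eqP size_s /allP s_in] ->].
have s_lt (a : 'I_n) : nth 0 s a < N.
  by have /s_in/andP[] : nth 0 s a \in s by rewrite mem_nth ?size_s.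
apply/imsetP; exists [ffun a => Ordinal (s_lt a)].
  rewrite inE; apply/forallP => a; apply/forallP => c; apply/implyP => ac; rewrite !ffunE /=.
  by apply: (sorted_ltn_nth ltn_trans 0 sorted_s); rewrite ?inE ?size_s.
by apply/setP => -[a c]; rewrite !inE /= !ffunE /= size_s !ltn_ord.
Qed.

Hypothesis Hirr : forall i : 'I_k, exists m : nat, exists H1 H2 : ograph m,
  [/\ H1 != H2, H1 \in induced_subgraphs (Gs i) m, H2 \in induced_subgraphs (Gs i) m,
      irreducible H1 & irreducible H2].

Lemma sum_two_irreducible t : t < k -> exists m s1 s2 (a c : 'I_m),
  [/\ sample (boundary t) (boundary t.+1) m s1, sample (boundary t) (boundary t.+1) m s2,
      irreducible_seq sum_edge s1, irreducible_seq sum_edge s2 &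
      sum_edge (nth 0 s1 a) (nth 0 s1 c) != sum_edge (nth 0 s2 a) (nth 0 s2 c)].
Proof.
move=> t_lt; have [m [H1 [H2 [neqH H1_in H2_in irr1 irr2]]]] := Hirr (Ordinal t_lt).
have [s1 sample1 e1] := induced_sample H1_in; have [s2 sample2 e2] := induced_sample H2_in.
have /existsP[[a c] neq_ac] : [exists p, (p \in H1) != (p \in H2)].
  apply: contraR neqH => /existsPn same; apply/eqP/setP => p; apply/eqP; exact/negPn/same.
have /and3P[_ /eqP size1 _] := sample1; have /and3P[_ /eqP size2 _] := sample2.
exists m, s1, s2, a, c; split => //; rewrite ?e1 ?e2 //.
- exact: irreducible_seq_induced e1 irr1.
- exact: irreducible_seq_induced e2 irr2.
Qed.

End BlockSum.

Theorem lemma17 (k : nat) (ns : 'I_k -> nat)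
  (Gs : forall i : 'I_k, ograph (ns i))
  (Hwf : forall i : 'I_k, wf_ograph (Gs i))
  (Hirr : forall i : 'I_k, exists m : nat, exists H1 H2 : ograph m,
      [/\ H1 != H2, H1 \in induced_subgraphs (Gs i) m,
          H2 \in induced_subgraphs (Gs i) m,
          irreducible H1 & irreducible H2]) :
  forall n : nat, (n <= k)%N -> (2 ^ (n - 1) <= S n (gsum Gs))%N.
Proof.
move=> n n_le_k; apply: leq_trans (subset_leq_card (sample_patterns_induced Gs n)).
have := tail_patterns_card (n := n) (boundary_homo ns) (sum_edge_local (Gs := Gs))
          (sum_two_irreducible Hirr) (t := 0).
by rewrite boundary0 boundary_size subn0 subn1; apply.
Qed.
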